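(* Let $p,q$ be positive integers with $2\le p/q<4$, and let $f,g$ be $(p,q)$-colourings of a connected graph $G$. If $f$ reconfigures to $g$, then there is a reconfiguration sequence from $f$ to $g$ of length $O(|V(G)|^2)$.
   Context: A $(p,q)$-colouring of $G$ is a map $f:V(G)\to\{0,\dots,p-1\}$ with $q\le|f(u)-f(v)|\le p-q$ for every edge $uv$. A reconfiguration sequence from $f$ to $g$ is a sequence $f=f_0,\dots,f_n=g$ of $(p,q)$-colourings in which consecutive colourings differ on at most one vertex; $f$ reconfigures to $g$ if one exists. The implicit constant may depend on $p,q$. *)

From mathcomp Require Import all_boot.
Set Implicit Arguments. Unset Strict Implicit. Unset Printing Implicit Defensive.

Definition natdist (a b : nat) : nat := (a - b) + (b - a).

Definition pq_colouring (p q : nat) (T : finType) (e : rel T) (f : T -> nat) : Prop :=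
  (forall v, f v < p) /\
  (forall u v, e u v -> q <= natdist (f u) (f v) <= p - q).

Definition differ_at_most_one (T : finType) (f g : T -> nat) : Prop :=
  exists v, forall u, u != v -> f u = g u.

Definition recon_seq (p q : nat) (T : finType) (e : rel T)
    (f g : T -> nat) (n : nat) (fs : nat -> T -> nat) : Prop :=
  fs 0 = f /\ fs n = g /\
  (forall i, i <= n -> pq_colouring p q e (fs i)) /\
  (forall i, i < n -> differ_at_most_one (fs i) (fs i.+1)).

Definition reconfigures (p q : nat) (T : finType) (e : rel T) (f g : T -> nat) : Prop :=
  exists n fs, recon_seq p q e f g n fs.

Definition connected_graph (T : finType) (e : rel T) : Prop :=
  forall x y, connect e x y.

(* Along a reconfiguration sequence f = f_0, ..., f_N the colourings lift to integer height
   functions X_t with X_t = f_t (mod p): each recolouring moves one height by the representative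
   of the colour change in [-p/2, p/2].  Since p < 4q, every X_t still satisfies
   q <= X_t u - X_t v <= p - q on each edge uv with f u > f v.  These "oriented heights" form a
   lattice under pointwise min and max, closed under adding constants, and inside such a lattice a
   walk from X to Y can be shortened to one of length sum_u |X u - Y u|: descend monotonically to
   the pointwise minimum, then ascend.  Across an edge Y - X varies by at most p, so on a
   connected graph after shifting Y by a multiple of p every |X u - Y u| is O(p |V|); the
   shortened walk has length O(|V|^2), and reducing it mod p gives the required sequence. *)

From Stdlib Require Import ZArith Lia FunctionalExtensionality.
From mathcomp Require Import all_boot zify.
Set Implicit Arguments. Unset Strict Implicit. Unset Printing Implicit Defensive.

Section Walks.
Variable T : finType.

Definition adjacent (A : Type) (a b : T -> A) : Prop :=
  exists v, forall u, u != v -> a u = b u.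

(* For [A := nat] and [P := pq_colouring p q e] this unfolds to [recon_seq]. *)
Definition walk (A : Type) (P : (T -> A) -> Prop) (X Y : T -> A) (n : nat)
    (hs : nat -> T -> A) : Prop :=
  hs 0 = X /\ hs n = Y /\ (forall i, i <= n -> P (hs i)) /\
  (forall i, i < n -> adjacent (hs i) (hs i.+1)).

Variables (A : Type) (P : (T -> A) -> Prop).

Lemma walk_refl X : P X -> walk P X X 0 (fun _ => X).
Proof. by move=> PX; do !split=> // i; case: i. Qed.

Lemma walk_step X Y :
  P X -> P Y -> adjacent X Y -> walk P X Y 1 (fun i => if i is 0 then X else Y).
Proof. by move=> PX PY XY; split=> //; split=> //; split=> -[|[|i]]. Qed.

Lemma walk_behead X Y n hs :
  walk P X Y n.+1 hs -> walk P (hs 1) Y n (fun i => hs i.+1).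
Proof.
by move=> [_ [hn [hP hd]]]; split=> //; split=> //; split=> i hi; [apply: hP | apply: hd].
Qed.

Lemma walk_rev X Y n hs : walk P X Y n hs -> walk P Y X n (fun i => hs (n - i)).
Proof.
move=> [h0 [hn [hP hd]]]; split; first by rewrite subn0.
split; first by rewrite subnn.
split=> [i _|i lt_in]; first exact/hP/leq_subr.
have [v hv] : adjacent (hs (n - i.+1)) (hs (n - i.+1).+1) by apply: hd; lia.
have -> : n - i = (n - i.+1).+1 by lia.
by exists v => u /hv.
Qed.

Lemma walk_cat X Y Z n m hs ks :
  walk P X Y n hs -> walk P Y Z m ks ->
  walk P X Z (n + m) (fun i => if i <= n then hs i else ks (i - n)).
Proof.
move=> [h0 [hn [hP hd]]] [k0 [km [kP kd]]]; split=> //.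
split.
  case: m km {kP kd} => [|m] km; first by rewrite addn0 leqnn -km k0.
  by rewrite addnS ltnNge leq_addr /= -addnS addKn.
split=> [i le_i|i lt_i]; first by case: ifP => [/hP | _] //; apply: kP; lia.
case: (ltngtP i n) lt_i => [lt_in _|lt_ni lt_i|-> lt_i]; first exact: hd.
  by rewrite subSn 1?ltnW //; apply: kd; lia.
by rewrite subSn // subnn hn -k0; apply: kd; lia.
Qed.

Lemma walk_map (B : Type) (Q : (T -> B) -> Prop) (phi : T -> A -> B) X Y n hs :
  walk P X Y n hs -> (forall i, i <= n -> Q (fun u => phi u (hs i u))) ->
  walk Q (fun u => phi u (X u)) (fun u => phi u (Y u)) n (fun i u => phi u (hs i u)).
Proof.
move=> [<- [<- [_ hd]]] hQ; split=> //; split=> //; split=> // i /hd [v hv].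
by exists v => u /hv ->.
Qed.

End Walks.

Section LatticeWalks.
Variables (T : finType) (P : (T -> Z) -> Prop).
Hypothesis P_min : forall X Y, P X -> P Y -> P (fun u => Z.min (X u) (Y u)).
Hypothesis P_max : forall X Y, P X -> P Y -> P (fun u => Z.max (X u) (Y u)).

Definition nonincreasing (n : nat) (hs : nat -> T -> Z) : Prop :=
  forall i, i < n -> forall u, (hs i.+1 u <= hs i u)%Z.

Lemma nonincreasing_le n hs i j u :
  nonincreasing n hs -> i <= j <= n -> (hs j u <= hs i u)%Z.
Proof.
move=> hmon /andP[]; elim: j => [|j IH] le_ij le_jn; first by rewrite (_ : i = 0); lia.
have [-> |ne_ij] := eqVneq i j.+1; first lia.
have lt_ij : i < j.+1 by rewrite ltn_neqAle ne_ij.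
have := hmon j le_jn u; have := IH lt_ij (ltnW le_jn); lia.
Qed.

Fixpoint running_min (hs : nat -> T -> Z) (t : nat) : T -> Z :=
  if t is t'.+1 then fun u => Z.min (running_min hs t' u) (hs t u) else hs 0.

Lemma running_min_le hs t u : (running_min hs t u <= hs t u)%Z.
Proof. by case: t => /= *; lia. Qed.

Lemma running_min_le0 hs t u : (running_min hs t u <= hs 0%N u)%Z.
Proof. by elim: t => /= [|t IH]; lia. Qed.

(* The witness is the running minimum of the walk, floored at the pointwise minimum of [X]
   and [Y]. *)
Lemma walk_descend X Y n hs :
  walk P X Y n hs ->
  exists2 hs', walk P X (fun u => Z.min (X u) (Y u)) n hs' & nonincreasing n hs'.
Proof.
move=> [h0 [hn [hP hd]]].
have P_XY : P (fun u => Z.min (X u) (Y u)) by rewrite -h0 -hn; apply: P_min; apply: hP.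
have P_run t : t <= n -> P (running_min hs t).
  by elim: t => [|t IH] le_tn /=; [apply: hP | apply: P_min; [apply: IH|apply: hP]; lia].
exists (fun t u => Z.max (Z.min (X u) (Y u)) (running_min hs t u)); last by move=> i _ u /=; lia.
split; first by apply: functional_extensionality => u /=; rewrite h0; lia.
split.
  apply: functional_extensionality => u.
  by have := @running_min_le hs n u; have := @running_min_le0 hs n u; rewrite h0 hn; lia.
split=> [i /P_run|i /hd [v hv]]; first exact: P_max.
by exists v => u /hv /= huv; have := @running_min_le hs i u; rewrite huv; lia.
Qed.

Lemma sum_dist_split (X Y W : T -> Z) :
  (forall u, Y u <= W u <= X u)%Z ->
  \sum_u Z.to_nat (X u - Y u) = \sum_u Z.to_nat (X u - W u) + \sum_u Z.to_nat (W u - Y u).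
Proof. by move=> hYWX; rewrite -big_split; apply: eq_bigr => u _ /=; have := hYWX u; lia. Qed.

(* A step of a nonincreasing walk either repeats a function or lowers the sum by at least one. *)
Lemma walk_nonincreasing_shorten X Y n hs :
  walk P X Y n hs -> nonincreasing n hs ->
  exists k hs', walk P X Y k hs' /\ k <= \sum_u Z.to_nat (X u - Y u).
Proof.
elim: n X hs => [|n IH] X hs hw hmon.
  have [h0 [hn [hP _]]] := hw; rewrite -h0 -hn in hw *.
  by exists 0, (fun _ => hs 0); split; [apply: walk_refl; apply: hP|].
have [h0 [hn [hP hd]]] := hw.
have [k [ws [hws le_k]]] : exists k ws, walk P (hs 1) Y k ws /\
    k <= \sum_u Z.to_nat (hs 1 u - Y u).
  by apply: IH (walk_behead hw) _ => i lt_in; apply: hmon.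
have hY1X u : (Y u <= hs 1%N u <= X u)%Z.
  rewrite -h0 -hn; have := @nonincreasing_le _ _ 0 1 u hmon.
  by have := @nonincreasing_le _ _ 1 n.+1 u hmon; lia.
rewrite (sum_dist_split hY1X).
have [sum0 | sum_pos] := eqVneq (\sum_u Z.to_nat (X u - hs 1 u)) 0.
  rewrite sum0 add0n; have -> : X = hs 1.
    apply: functional_extensionality => u.
    move/eqP: (sum0); rewrite sum_nat_eq0 => /forallP /(_ u) /eqP.
    by have := hY1X u; lia.
  by exists k, ws.
have hstep : walk P X (hs 1) 1 (fun i => if i is 0 then X else hs 1).
  by apply: walk_step; [rewrite -h0; apply: hP | apply: hP | rewrite -h0; apply: hd].
exists (1 + k); eexists; split; first exact: walk_cat hstep hws.
by apply: leq_add; first rewrite lt0n.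
Qed.

Lemma walk_shorten X Y n hs :
  walk P X Y n hs ->
  exists k hs', walk P X Y k hs' /\ k <= \sum_u Z.to_nat (Z.abs (X u - Y u)).
Proof.
move=> hw.
have [ds hds mon_ds] := walk_descend hw.
have [k1 [ws1 [hws1 le_k1]]] := walk_nonincreasing_shorten hds mon_ds.
have [es hes mon_es] := walk_descend (walk_rev hw).
have [k2 [ws2 [hws2 le_k2]]] := walk_nonincreasing_shorten hes mon_es.
have eXY : (fun u => Z.min (Y u) (X u)) = (fun u => Z.min (X u) (Y u)).
  by apply: functional_extensionality => u; lia.
rewrite eXY in hws2.
exists (k1 + k2); eexists; split; first exact: walk_cat hws1 (walk_rev hws2).
have -> : \sum_u Z.to_nat (Z.abs (X u - Y u)) =
    \sum_u Z.to_nat (X u - Z.min (X u) (Y u)) + \sum_u Z.to_nat (Y u - Z.min (Y u) (X u)).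
  by rewrite -big_split; apply: eq_bigr => u _ /=; lia.
exact: leq_add.
Qed.

Lemma walk_clamp_min X Y W n hs :
  P W -> (forall u, X u <= W u)%Z -> walk P X Y n hs ->
  walk P X (fun u => Z.min (Y u) (W u)) n (fun i u => Z.min (hs i u) (W u)).
Proof.
move=> PW le_XW hw.
have eX : (fun u => Z.min (X u) (W u)) = X.
  by apply: functional_extensionality => u; have := le_XW u; lia.
have := walk_map (phi := fun u z => Z.min z (W u)) hw; rewrite eX; apply=> i le_in.
by case: hw => _ [_ [hP _]]; apply/P_min/PW/hP.
Qed.

Lemma walk_clamp_max X Y W n hs :
  P W -> (forall u, W u <= X u)%Z -> walk P X Y n hs ->
  walk P X (fun u => Z.max (Y u) (W u)) n (fun i u => Z.max (hs i u) (W u)).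
Proof.
move=> PW le_WX hw.
have eX : (fun u => Z.max (X u) (W u)) = X.
  by apply: functional_extensionality => u; have := le_WX u; lia.
have := walk_map (phi := fun u z => Z.max z (W u)) hw; rewrite eX; apply=> i le_in.
by case: hw => _ [_ [hP _]]; apply/P_max/PW/hP.
Qed.

(* A translate [Y + m c] lying entirely above or below [X] is reached by clamping the walk
   against it with [min] or [max]. *)
Lemma walk_shift_target (m S : Z) (v0 : T) X Y n hs :
  (0 < m)%Z -> (forall X c, P X -> P (fun u => X u + c)%Z) -> walk P X Y n hs ->
  (forall u, Z.abs ((Y u - X u) - (Y v0 - X v0)) <= S)%Z ->
  exists c hs', walk P X (fun u => Y u + m * c)%Z n hs' /\
    (forall u, Z.abs (Y u + m * c - X u) <= 2 * S + m)%Z.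
Proof.
move=> m_gt0 P_shift hw hS; set d := (Y v0 - X v0)%Z in hS.
have PY : P Y by case: hw => _ [<- [hP _]]; apply: hP.
have S_ge0 := hS v0; rewrite Z.sub_diag in S_ge0.
case: (Z_le_gt_dec S d) => [le_Sd|lt_dS].
  set c := ((d - S) / m)%Z.
  have c_ge0 : (0 <= c)%Z by apply: Z.div_pos; lia.
  have := Z.mul_div_le (d - S) m m_gt0; have := Z.mul_succ_div_gt (d - S) m m_gt0.
  rewrite -/c => ub lb.
  have hW u : (0 <= Y u + m * - c - X u <= 2 * S + m)%Z by have := hS u; lia.
  exists (- c)%Z; eexists; split; last by move=> u; have := hW u; lia.
  have -> : (fun u => Y u + m * - c)%Z = (fun u => Z.min (Y u) (Y u + m * - c))%Z.
    by apply: functional_extensionality => u; nia.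
  by apply: walk_clamp_min hw; [exact: P_shift | move=> u; have := hW u; lia].
case: (Z_le_gt_dec d (- S)) => [le_dS|lt_Sd].
  set c := ((- d - S) / m)%Z.
  have c_ge0 : (0 <= c)%Z by apply: Z.div_pos; lia.
  have := Z.mul_div_le (- d - S) m m_gt0; have := Z.mul_succ_div_gt (- d - S) m m_gt0.
  rewrite -/c => ub lb.
  have hW u : (- (2 * S + m) <= Y u + m * c - X u <= 0)%Z by have := hS u; lia.
  exists c; eexists; split; last by move=> u; have := hW u; lia.
  have -> : (fun u => Y u + m * c)%Z = (fun u => Z.max (Y u) (Y u + m * c))%Z.
    by apply: functional_extensionality => u; nia.
  by apply: walk_clamp_max hw; [exact: P_shift | move=> u; have := hW u; lia].
exists 0%Z, hs; split=> [|u]; last by have := hS u; lia.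
by have -> : (fun u => Y u + m * 0)%Z = Y by apply: functional_extensionality => u; lia.
Qed.

End LatticeWalks.

Lemma connected_lipschitz (T : finType) (e : rel T) (D : T -> Z) (L : Z) :
  connected_graph e -> (0 <= L)%Z -> (forall u v, e u v -> Z.abs (D u - D v) <= L)%Z ->
  forall x y, (Z.abs (D x - D y) <= L * Z.of_nat #|T|)%Z.
Proof.
move=> conn L_ge0 hD x y.
have hpath s z : path e z s -> (Z.abs (D z - D (last z s)) <= L * Z.of_nat (size s))%Z.
  elim: s z => [|a s IH] z /=; first by lia.
  by case/andP=> /hD ha /IH hs; lia.
have [s hs ->] := connectP (conn x y).
case/shortenP: hs => s' hs' uniq_s' _.
have lt_s'T : size s' < #|T|.
  by change (size (x :: s') <= #|T|); rewrite -(card_uniqP uniq_s') max_card.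
have : (L * Z.of_nat (size s') <= L * Z.of_nat #|T|)%Z.
  by apply: Z.mul_le_mono_nonneg_l; lia.
move=> le_sT; exact: Z.le_trans (hpath _ _ hs') le_sT.
Qed.

Lemma divide_abs_lt_twice (p k : Z) :
  (0 < p)%Z -> (p | k)%Z -> (Z.abs k < 2 * p)%Z -> (k = - p \/ k = 0 \/ k = p)%Z.
Proof.
move=> p_gt0 [j ->] hk.
have : (j <= -2 \/ -1 <= j <= 1 \/ 2 <= j)%Z by lia.
case=> [hj|[hj|hj]]; [nia | | nia].
have : (j = -1 \/ j = 0 \/ j = 1)%Z by lia.
by case=> [|[|]] ->; lia.
Qed.

(* The only use of [p < 4q]: [y] lies within [p/2] of the window [[q, p - q]], hence cannot be
   congruent to a [z] of the opposite sign. *)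
Lemma height_step (p q x y z : Z) :
  (0 < q)%Z -> (p < 4 * q)%Z -> (q <= x <= p - q)%Z -> (Z.abs (2 * (y - x)) <= p)%Z ->
  (q <= Z.abs z <= p - q)%Z -> (p | y - z)%Z -> (q <= y <= p - q)%Z.
Proof.
move=> q_gt0 lt_p_4q hx hyx hz hdiv.
by have [|[|]] := @divide_abs_lt_twice p (y - z) ltac:(lia) hdiv ltac:(lia); lia.
Qed.

Lemma abs_sub_mod_window (p q x y : Z) :
  (0 < p)%Z -> (0 <= q)%Z -> (q <= x - y <= p - q)%Z ->
  (q <= Z.abs (x mod p - y mod p) <= p - q)%Z.
Proof.
move=> p_gt0 q_ge0 hxy.
have hdiv : (p | (x - y) - (x mod p - y mod p))%Z.
  exists (x / p - y / p)%Z.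
  by have := Z.div_mod x p ltac:(lia); have := Z.div_mod y p ltac:(lia); lia.
have bx := Z.mod_pos_bound x p p_gt0; have by' := Z.mod_pos_bound y p p_gt0.
by have [|[|]] := @divide_abs_lt_twice p _ p_gt0 hdiv ltac:(lia); lia.
Qed.

Section HeightFunctions.
Variables (p q : nat) (T : finType) (e : rel T).

(* Lifts of colourings to the integers, with the orientation of the edges fixed by [f]. *)
Definition oriented_height (f : T -> nat) (X : T -> Z) : Prop :=
  forall u v, e u v -> f v < f u -> (Z.of_nat q <= X u - X v <= Z.of_nat p - Z.of_nat q)%Z.

Lemma oriented_height_min f X Y :
  oriented_height f X -> oriented_height f Y -> oriented_height f (fun u => Z.min (X u) (Y u)).
Proof. by move=> hX hY u v huv hf; have := hX u v huv hf; have := hY u v huv hf; lia. Qed.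

Lemma oriented_height_max f X Y :
  oriented_height f X -> oriented_height f Y -> oriented_height f (fun u => Z.max (X u) (Y u)).
Proof. by move=> hX hY u v huv hf; have := hX u v huv hf; have := hY u v huv hf; lia. Qed.

Lemma oriented_height_shift f X c :
  oriented_height f X -> oriented_height f (fun u => X u + c)%Z.
Proof. by move=> hX u v huv hf; have := hX u v huv hf; lia. Qed.

Lemma colouring_edge_dist f u v : pq_colouring p q e f -> e u v ->
  (Z.of_nat q <= Z.abs (Z.of_nat (f u) - Z.of_nat (f v)) <= Z.of_nat p - Z.of_nat q)%Z.
Proof. by case=> _ hf /hf; rewrite /natdist; lia. Qed.

Lemma colouring_oriented_height f :
  pq_colouring p q e f -> oriented_height f (fun u => Z.of_nat (f u)).
Proof. by move=> hf u v /(colouring_edge_dist hf); lia. Qed.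

Lemma oriented_height_edge f X u v :
  0 < q -> symmetric e -> pq_colouring p q e f -> oriented_height f X -> e u v ->
  f v < f u /\ (Z.of_nat q <= X u - X v <= Z.of_nat p - Z.of_nat q)%Z \/
  f u < f v /\ (Z.of_nat q <= X v - X u <= Z.of_nat p - Z.of_nat q)%Z.
Proof.
move=> q_gt0 e_sym hf hX huv; have := colouring_edge_dist hf huv.
case: (ltngtP (f v) (f u)) => [lt_vu|lt_uv|->]; last by lia.
  by left; split; last exact: hX.
by right; split; last by apply: hX; rewrite // e_sym.
Qed.

Lemma oriented_height_diff_lipschitz f X Y u v :
  0 < q -> symmetric e -> pq_colouring p q e f ->
  oriented_height f X -> oriented_height f Y -> e u v ->
  (Z.abs ((Y u - X u) - (Y v - X v)) <= Z.of_nat p)%Z.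
Proof.
move=> q_gt0 e_sym hf hX hY huv.
have := oriented_height_edge q_gt0 e_sym hf hX huv.
by case: (oriented_height_edge q_gt0 e_sym hf hY huv); lia.
Qed.

Definition col (X : T -> Z) (u : T) : nat := Z.to_nat (X u mod Z.of_nat p).

Lemma col_congr X a :
  (forall u, (Z.of_nat p | X u - Z.of_nat (a u))%Z) -> (forall u, a u < p) -> col X = a.
Proof.
move=> hdiv lt_ap; apply: functional_extensionality => u; have [j hj] := hdiv u.
rewrite /col (_ : X u = Z.of_nat (a u) + j * Z.of_nat p)%Z; last by lia.
by rewrite Z_mod_plus_full Z.mod_small; have := lt_ap u; lia.
Qed.

Lemma col_colouring f X :
  0 < q -> 2 * q <= p -> symmetric e -> pq_colouring p q e f -> oriented_height f X ->
  pq_colouring p q e (col X).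
Proof.
move=> q_gt0 le_2q_p e_sym hf hX; have p_gt0 : (0 < Z.of_nat p)%Z by lia.
split=> [v|u v huv]; first by have := Z.mod_pos_bound (X v) _ p_gt0; rewrite /col; lia.
have := Z.mod_pos_bound (X u) _ p_gt0; have := Z.mod_pos_bound (X v) _ p_gt0.
rewrite /natdist /col; case: (oriented_height_edge q_gt0 e_sym hf hX huv) => [[_ hXe]|[_ hXe]].
  by have := abs_sub_mod_window p_gt0 (Zle_0_nat q) hXe; lia.
by have := abs_sub_mod_window p_gt0 (Zle_0_nat q) hXe; lia.
Qed.

(* For colours [a, b < p]: the representative of [b - a] modulo [p] in [[-p/2, p/2]]. *)
Definition cyc_diff (a b : nat) : Z :=
  let d := (Z.of_nat b - Z.of_nat a)%Z in
  if (Z.of_nat p <? 2 * d)%Z then (d - Z.of_nat p)%Z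
  else if (2 * d <? - Z.of_nat p)%Z then (d + Z.of_nat p)%Z else d.

Lemma cyc_diff_congr a b : (Z.of_nat p | cyc_diff a b - (Z.of_nat b - Z.of_nat a))%Z.
Proof.
rewrite /cyc_diff; case: Z.ltb_spec => _; first by exists (-1)%Z; lia.
by case: Z.ltb_spec => _; [exists 1%Z | exists 0%Z]; lia.
Qed.

Lemma cyc_diff_bound a b : a < p -> b < p -> (Z.abs (2 * cyc_diff a b) <= Z.of_nat p)%Z.
Proof.
by move=> lt_ap lt_bp; rewrite /cyc_diff; case: Z.ltb_spec => ?; last case: Z.ltb_spec => ?; lia.
Qed.

Lemma cyc_diff_id a : cyc_diff a a = 0%Z.
Proof. by rewrite /cyc_diff Z.sub_diag; case: Z.ltb_spec => ?; last case: Z.ltb_spec => ?; lia. Qed.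

Fixpoint heights (fs : nat -> T -> nat) (t : nat) : T -> Z :=
  if t is t'.+1 then fun u => (heights fs t' u + cyc_diff (fs t' u) (fs t u))%Z
  else fun u => Z.of_nat (fs 0 u).

Lemma heights_congr fs t u : (Z.of_nat p | heights fs t u - Z.of_nat (fs t u))%Z.
Proof.
elim: t => [|t IH] /=; first by exists 0%Z; lia.
rewrite (_ : (_ - _ = (heights fs t u - Z.of_nat (fs t u)) +
  (cyc_diff (fs t u) (fs t.+1 u) - (Z.of_nat (fs t.+1 u) - Z.of_nat (fs t u))))%Z); last by lia.
exact/Z.divide_add_r/cyc_diff_congr.
Qed.

Lemma heights_oriented f g N fs t :
  0 < q -> p < 4 * q -> recon_seq p q e f g N fs -> t <= N -> oriented_height f (heights fs t).
Proof.
move=> q_gt0 lt_p_4q [fs0 [_ [hcol hadj]]]; rewrite -{}fs0.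
elim: t => [_|t IH lt_tN]; first exact/colouring_oriented_height/hcol.
move=> a b hab lt_ba /=.
have [v hv] := hadj t lt_tN.
have [lt_p _] := hcol t (ltnW lt_tN); have [lt_p' _] := hcol t.+1 lt_tN.
have D_bound w := cyc_diff_bound (lt_p w) (lt_p' w).
have D_zero w : w != v -> cyc_diff (fs t w) (fs t.+1 w) = 0%Z by move=> /hv ->; apply: cyc_diff_id.
apply: (@height_step _ _ (heights fs t a - heights fs t b) _
          (Z.of_nat (fs t.+1 a) - Z.of_nat (fs t.+1 b))).
1,2: lia.
- exact: IH (ltnW lt_tN) a b hab lt_ba.
- have := D_bound a; have := D_bound b.
  case: (eqVneq a v) => [->|/D_zero ->]; case: (eqVneq b v) => [->|/D_zero ->]; lia.
- exact: colouring_edge_dist (hcol t.+1 lt_tN) hab.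
rewrite (_ : (_ - _ = (heights fs t.+1 a - Z.of_nat (fs t.+1 a)) -
  (heights fs t.+1 b - Z.of_nat (fs t.+1 b)))%Z); last by rewrite /=; lia.
exact/Z.divide_sub_r/heights_congr/heights_congr.
Qed.

Lemma heights_walk f g N fs :
  0 < q -> p < 4 * q -> recon_seq p q e f g N fs ->
  walk (oriented_height f) (fun u => Z.of_nat (f u)) (heights fs N) N (heights fs).
Proof.
move=> q_gt0 lt_p_4q hfs; have [fs0 [_ [_ hadj]]] := hfs.
split; first by rewrite /= fs0.
split=> //; split=> [i|i /hadj [v hv]]; first exact: heights_oriented hfs.
by exists v => u /hv /= ->; rewrite cyc_diff_id Z.add_0_r.
Qed.

Lemma col_shift X c : col (fun u => X u + Z.of_nat p * c)%Z = col X.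
Proof.
apply: functional_extensionality => u.
by rewrite /col (Z.mul_comm (Z.of_nat p)) Z_mod_plus_full.
Qed.

Lemma col_of_nat f : (forall u, f u < p) -> col (fun u => Z.of_nat (f u)) = f.
Proof. by move=> lt_fp; apply: col_congr => // u; exists 0%Z; lia. Qed.

Lemma col_heights fs t : (forall u, fs t u < p) -> col (heights fs t) = fs t.
Proof. by move=> lt_fp; apply: col_congr => // u; apply: heights_congr. Qed.

Lemma walk_col f X Y n hs :
  0 < q -> 2 * q <= p -> symmetric e -> pq_colouring p q e f ->
  walk (oriented_height f) X Y n hs ->
  walk (pq_colouring p q e) (col X) (col Y) n (fun i => col (hs i)).
Proof.
move=> q_gt0 le_2q_p e_sym hf hw.
apply: (walk_map (phi := fun _ z => Z.to_nat (z mod Z.of_nat p)) hw).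
by have [_ [_ [hP _]]] := hw; move=> i /hP; apply: col_colouring.
Qed.

Lemma oriented_heights_spread f X Y :
  0 < q -> symmetric e -> connected_graph e -> pq_colouring p q e f ->
  oriented_height f X -> oriented_height f Y ->
  forall u v, (Z.abs ((Y u - X u) - (Y v - X v)) <= Z.of_nat p * Z.of_nat #|T|)%Z.
Proof.
move=> q_gt0 e_sym conn hf hX hY.
apply: (connected_lipschitz (D := fun w => (Y w - X w)%Z) conn) => [|u v huv]; first lia.
exact: oriented_height_diff_lipschitz q_gt0 e_sym hf hX hY huv.
Qed.

Lemma short_oriented_walk (v0 : T) f X Y n hs :
  0 < q -> symmetric e -> connected_graph e -> pq_colouring p q e f ->
  walk (oriented_height f) X Y n hs ->
  exists c k hs', walk (oriented_height f) X (fun u => Y u + Z.of_nat p * c)%Z k hs' /\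
    k <= 3 * p * #|T| ^ 2.
Proof.
move=> q_gt0 e_sym conn hf hw.
have p_gt0 : (0 < Z.of_nat p)%Z by case: hf => /(_ v0); lia.
have [PX PY] : oriented_height f X /\ oriented_height f Y.
  by have [<- [<- [hP _]]] := hw; split; apply: hP.
have hS u := oriented_heights_spread (u := u) (v := v0) q_gt0 e_sym conn hf PX PY.
have [c [hs' [hw' hW]]] := walk_shift_target (@oriented_height_min f)
  (@oriented_height_max f) p_gt0 (@oriented_height_shift f) hw hS.
have [k [ks [hk le_k]]] := walk_shorten (@oriented_height_min f) (@oriented_height_max f) hw'.
exists c, k, ks; split=> //; apply: (leq_trans le_k).
apply: (@leq_trans (\sum_(u : T) (2 * p * #|T| + p))).
  by apply: leq_sum => u _; have := hW u; lia.
have T_gt0 : 0 < #|T| by apply/card_gt0P; exists v0.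
by rewrite sum_nat_const (_ : #|xpredT| = #|T|) //; nia.
Qed.

End HeightFunctions.

Unset Implicit Arguments.
Theorem corollary2p11 (p q : nat) (hq : 0 < q) (hp1 : 2 * q <= p) (hp2 : p < 4 * q) :
  exists C : nat,
    forall (T : finType) (e : rel T),
      symmetric e -> irreflexive e -> connected_graph e ->
      forall f g : T -> nat,
        pq_colouring p q e f -> pq_colouring p q e g ->
        reconfigures p q e f g ->
        exists (n : nat) (fs : nat -> T -> nat),
          recon_seq p q e f g n fs /\ n <= C * #|T| ^ 2.
Proof.
exists (3 * p) => T e e_sym _ conn f g hf hg [N [fs hfs]].
case: (pickP (@predT T)) => [v0 _ | T0]; last first.
  have -> : g = f by apply: functional_extensionality => u; have := T0 u.
  by exists 0, (fun _ => f); split; first exact: walk_refl.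
have [c [k [hs [hw le_k]]]] :=
  short_oriented_walk v0 hq e_sym conn hf (heights_walk hq hp2 hfs).
exists k, (fun i => col p (hs i)); split=> //.
have [_ [<- [hcol _]]] := hfs; have := walk_col hq hp1 e_sym hf hw.
by rewrite col_shift col_of_nat ?col_heights //; [case: (hcol N) | case: hf].
Qed.
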